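(* Let $K_{1,n-1}$ be the star graph with $n$ nodes, with the node of degree $n-1$ labeled $1$. Then the communicability angles satisfy $$\cos^2\theta_{1q}(K_{1,n-1})=\frac{\tanh^2(\sqrt{n-1})}{(n-2)\,\mathrm{sech}(\sqrt{n-1})+1}\quad\text{for } q\neq 1,$$ $$\cos\theta_{pq}(K_{1,n-1})=\frac{\cosh(\sqrt{n-1})-1}{\cosh(\sqrt{n-1})+n-2}\quad\text{for } p\neq1,\ q\neq1,\ p\neq q.$$
   Context: For a graph with adjacency matrix $A$, the communicability is $G_{pq}=(e^{A})_{pq}$ and the communicability angle $\theta_{pq}\in[0^\circ,90^\circ]$ between nodes $p,q$ is defined by $\cos\theta_{pq}=G_{pq}/\sqrt{G_{pp}G_{qq}}$. *)

From HB Require Import structures.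
From mathcomp Require Import all_boot all_order all_algebra.
From mathcomp Require Import all_classical all_reals all_analysis.
Set Implicit Arguments. Unset Strict Implicit. Unset Printing Implicit Defensive.
Import Order.TTheory GRing.Theory Num.Theory.
Import numFieldNormedType.Exports.
Local Open Scope ring_scope.

Definition expmx {R : realType} {n : nat} (A : 'M[R]_n) : 'M[R]_n :=
  \matrix_(i, j) limn (fun N => \sum_(0 <= k < N) ((A ^+ k) i j / (k`!)%:R)).

Definition communicability {R : realType} {n : nat} (A : 'M[R]_n) : 'M[R]_n :=
  expmx A.

Definition comm_angle {R : realType} {n : nat} (A : 'M[R]_n) (p q : 'I_n) : R :=
  let G := communicability A in
  acos (G p q / Num.sqrt (G p p * G q q)).

(* Adjacency matrix of the star graph K_{1,n-1} on nodes 'I_n, where the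
   centre (the paper's node 1) is the ordinal with value 0. *)
Definition star_adj {R : realType} (n : nat) : 'M[R]_n :=
  \matrix_(i, j) (if ((val i == 0%N) && (val j != 0%N)) ||
                     ((val j == 0%N) && (val i != 0%N)) then 1 else 0).

Definition cosh {R : realType} (x : R) : R := (expR x + expR (- x)) / 2.
Definition sinh {R : realType} (x : R) : R := (expR x - expR (- x)) / 2.
Definition tanh {R : realType} (x : R) : R := sinh x / cosh x.
Definition sech {R : realType} (x : R) : R := (cosh x)^-1.

From HB Require Import structures.
From mathcomp Require Import all_boot all_order all_algebra.
From mathcomp Require Import all_classical all_reals all_analysis.
From mathcomp Require Import ring lra.
Set Implicit Arguments.
Unset Strict Implicit.
Unset Printing Implicit Defensive.

Import Order.TTheory GRing.Theory Num.Theory.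
Local Open Scope ring_scope.

(* With x = sqrt (n - 1) the adjacency matrix A of the star satisfies
   A^3 = x^2 A, so the entries of A^k are explicit combinations of x^k and
   (-x)^k: the centre-centre entry is the even part (x^k + (-x)^k)/2, the
   centre-leaf entries are the odd part divided by x, and each leaf-leaf
   entry is the even part divided by n - 1, up to a correction at k = 0.
   Summing the exponential series gives
     G_11 = cosh x,  G_1q = sinh x / x,  G_pq = (cosh x - 1)/(n - 1) + [p = q]
   for leaves p, q, and both formulas follow by elementary algebra with
   cosh^2 - sinh^2 = 1. *)

Lemma limn_series_exp_comb (R : realType) (a b d y : R) (u : nat -> R) :
  (forall k, u k = a * exp_coeff y k + b * exp_coeff (- y) k + d * exp_coeff 0 k) ->
  limn (fun N => \sum_(0 <= k < N) u k) = a * expR y + b * expR (- y) + d.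
Proof.
move=> hu.
have -> : (fun N => \sum_(0 <= k < N) u k) = (fun N => a * series (exp_coeff y) N +
    b * series (exp_coeff (- y)) N + d * series (exp_coeff 0) N).
  apply/funext => N; rewrite /series /= !mulr_sumr -!big_split /=.
  by apply: eq_bigr => k _; exact: hu.
apply: cvg_lim => //; rewrite -[d in _ + d]mulr1 -(expR0 R).
by apply: cvgD; [apply: cvgD|]; apply: cvgMl_tmp; exact: is_cvg_series_exp_coeff.
Qed.

Lemma cos_comm_angle (R : realType) (n : nat) (A : 'M[R]_n) (p q : 'I_n) :
  let G := communicability A in
  0 <= G p q -> 0 < G p p * G q q -> G p q ^+ 2 <= G p p * G q q ->
  cos (comm_angle A p q) = G p q / Num.sqrt (G p p * G q q).
Proof.
move=> G Gpq_ge0 Gpp_Gqq_gt0 Gpq_le; rewrite /comm_angle -/G.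
have sqrt_gt0 : 0 < Num.sqrt (G p p * G q q) by rewrite sqrtr_gt0.
apply: acosK; rewrite in_itv /=; apply/andP; split.
  by rewrite (le_trans _ (divr_ge0 Gpq_ge0 (ltW sqrt_gt0))) // lerN10.
rewrite ler_pdivrMr // mul1r -(ger0_norm Gpq_ge0) -sqrtr_sqr.
exact: ler_wsqrtr.
Qed.

Lemma cosh_sinh (R : realType) (x : R) : cosh x ^+ 2 - sinh x ^+ 2 = 1.
Proof.
rewrite /cosh /sinh expRN.
by field; rewrite gt_eqF // expR_gt0.
Qed.

Lemma cosh_gt0 (R : realType) (x : R) : 0 < cosh x.
Proof. by rewrite /cosh divr_gt0 // addr_gt0 // expR_gt0. Qed.

Lemma sinh_ge0 (R : realType) (x : R) : 0 <= x -> 0 <= sinh x.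
Proof.
move=> x_ge0; rewrite /sinh divr_ge0 // subr_ge0 ler_expR.
by rewrite (le_trans _ x_ge0) // oppr_le0.
Qed.

Lemma cosh_ge1 (R : realType) (x : R) : 1 <= cosh x.
Proof.
have := cosh_sinh x; have := cosh_gt0 x; have := sqr_ge0 (sinh x).
rewrite !expr2; nra.
Qed.

Section StarGraph.
Variables (R : realType) (n : nat).
Local Notation N := n.+2.
Local Notation A := (@star_adj R N).

Lemma star_adj_mulmx (B : 'M[R]_N) (i j : 'I_N) :
  (B *m A) i j = if val j == 0%N then \sum_(l < n.+1) B i (lift ord0 l)
                 else B i ord0.
Proof.
rewrite mxE big_ord_recl !mxE /=.
case: (unliftP ord0 j) => [j'|] -> /=.
  by rewrite mulr1 big1 ?addr0 // => l _; rewrite !mxE mulr0.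
by rewrite mulr0 add0r; apply: eq_bigr => l _; rewrite !mxE mulr1.
Qed.

Let m : R := n.+1%:R.
Variable x : R.
Hypotheses (x_gt0 : 0 < x) (sqr_x : x ^+ 2 = m).

Let m_neq0 : m != 0. Proof. by rewrite pnatr_eq0. Qed.
Let x_neq0 : x != 0. Proof. by rewrite gt_eqF. Qed.
Let fact_neq0 k : k`!%:R != 0 :> R. Proof. by rewrite pnatr_eq0 -lt0n fact_gt0. Qed.

Let even_pow k := (x ^+ k + (- x) ^+ k) / 2.
Let odd_pow k := (x ^+ k - (- x) ^+ k) / (2 * x).

Let even_powS k : even_pow k.+1 = m * odd_pow k.
Proof. by rewrite /even_pow /odd_pow -sqr_x !exprS; field. Qed.

Let odd_powS k : odd_pow k.+1 = even_pow k.
Proof. by rewrite /odd_pow /even_pow !exprS; field. Qed.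

Definition star_pow_entry (i j : 'I_N) k :=
  if val i == 0%N then (if val j == 0%N then even_pow k else odd_pow k)
  else if val j == 0%N then odd_pow k
  else even_pow k / m + (k == 0%N)%:R * ((i == j)%:R - m^-1).

Lemma star_adj_pow k i j : (A ^+ k) i j = star_pow_entry i j k.
Proof.
elim: k i j => [|k IH] i j.
  rewrite expr0 mxE /star_pow_entry /even_pow /odd_pow !expr0 subrr mul0r.
  case: (unliftP ord0 i) => [i'|] ->; case: (unliftP ord0 j) => [j'|] -> //=.
    by rewrite mul1r; field.
  by field.
rewrite exprSr star_adj_mulmx /star_pow_entry.
case: (unliftP ord0 i) => [i'|] ->; case: (unliftP ord0 j) => [j'|] -> /=;
  rewrite ?IH /star_pow_entry /= ?odd_powS //.
- by rewrite even_powS mul0r addr0 mulrC mulKf.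
- under eq_bigr => l _ do rewrite IH /star_pow_entry /=.
  have sum_delta : \sum_(l < n.+1) ((lift ord0 i' == lift ord0 l)%:R : R) = 1.
    rewrite (bigD1 i') //= eqxx big1 ?addr0 // => l.
    by rewrite (inj_eq lift_inj) eq_sym => /negbTE ->.
  rewrite big_split /= sumr_const card_ord -mulr_sumr big_split /= sumr_const.
  rewrite card_ord sum_delta.
  rewrite -(mulr_natr (even_pow k / m)) -(mulr_natr (- m^-1)) -/m.
  by rewrite mulNr mulVf // subrr !mulr0 addr0 divfK.
- under eq_bigr => l _ do rewrite IH /star_pow_entry /=.
  by rewrite sumr_const card_ord -mulr_natl -/m even_powS.
Qed.

Lemma expmx_star_adj i j :
  expmx A i j = limn (fun M => \sum_(0 <= k < M) (star_pow_entry i j k / k`!%:R)).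
Proof.
rewrite /expmx mxE.
by under eq_fun => M do under eq_bigr => k _ do rewrite star_adj_pow.
Qed.

Lemma expmx_star_centre : expmx A ord0 ord0 = cosh x.
Proof.
rewrite expmx_star_adj (@limn_series_exp_comb _ (1 / 2) (1 / 2) 0 x); last first.
  by move=> k; rewrite /star_pow_entry /even_pow /exp_coeff /=; field.
by rewrite /cosh; field.
Qed.

Lemma expmx_star_centre_leaf q : expmx A ord0 (lift ord0 q) = sinh x / x.
Proof.
rewrite expmx_star_adj (@limn_series_exp_comb _ (1 / (2 * x)) (-1 / (2 * x)) 0 x).
  by rewrite /sinh; field.
move=> k; rewrite /star_pow_entry /odd_pow /exp_coeff /=.
by field; rewrite fact_neq0 x_neq0.
Qed.

Lemma expmx_star_leaf p q :
  expmx A (lift ord0 p) (lift ord0 q) = (cosh x - 1) / m + (p == q)%:R.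
Proof.
rewrite expmx_star_adj (@limn_series_exp_comb _ (1 / (2 * m)) (1 / (2 * m))
  ((p == q)%:R - m^-1) x).
  by rewrite /cosh; field.
move=> k; rewrite /star_pow_entry /even_pow /exp_coeff /= expr0n.
by rewrite (inj_eq lift_inj); field; rewrite fact_neq0 nat1r.
Qed.

Lemma expmx_star_leaf_diag q :
  expmx A (lift ord0 q) (lift ord0 q) = (cosh x + n%:R) / m.
Proof. by rewrite expmx_star_leaf eqxx /=; field; rewrite nat1r. Qed.

Let c_gt0 := cosh_gt0 x.
Let c_ge1 := cosh_ge1 x.
Let c_add_n_gt0 : 0 < cosh x + n%:R.
Proof. by rewrite ltr_wpDr. Qed.
Let diag_gt0 : 0 < (cosh x + n%:R) / m.
Proof. by rewrite divr_gt0 ?ltr0n. Qed.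

Lemma cos2_comm_angle_star_centre q :
  cos (comm_angle A ord0 (lift ord0 q)) ^+ 2 =
    tanh x ^+ 2 / (n%:R * sech x + 1).
Proof.
have sqr_sinh : (sinh x / x) ^+ 2 = (cosh x ^+ 2 - 1) / m.
  by rewrite expr_div_n sqr_x -(cosh_sinh x) opprB addrC subrK.
rewrite cos_comm_angle; rewrite /communicability ?expmx_star_centre
  ?expmx_star_centre_leaf ?expmx_star_leaf_diag; last first.
- rewrite sqr_sinh -subr_ge0 mulrA -mulrBl divr_ge0 ?ler0n //.
  by rewrite expr2; have := mulr_ge0 (ltW c_gt0) (ler0n R n); lra.
- by rewrite mulr_gt0.
- by rewrite divr_ge0 ?sinh_ge0 ?ltW.
have sqr_sinh_cosh : sinh x ^+ 2 = cosh x ^+ 2 - 1.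
  by rewrite -(cosh_sinh x) opprB addrC subrK.
rewrite expr_div_n sqr_sinh sqr_sqrtr ?(ltW (mulr_gt0 c_gt0 diag_gt0)) //.
rewrite /tanh /sech [(sinh x / _) ^+ 2]expr_div_n sqr_sinh_cosh.
by field; rewrite gt_eqF // addrC gt_eqF // nat1r pnatr_eq0.
Qed.

Lemma cos_comm_angle_star_leaves p q : p != q ->
  cos (comm_angle A (lift ord0 p) (lift ord0 q)) =
    (cosh x - 1) / (cosh x + n%:R).
Proof.
move=> /negbTE p_neq_q.
have off_ge0 : 0 <= (cosh x - 1) / m by rewrite divr_ge0 ?subr_ge0.
have off_le_diag : (cosh x - 1) / m <= (cosh x + n%:R) / m.
  by rewrite ler_wpM2r ?invr_ge0 // lerD2l (le_trans (lerN10 R)).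
rewrite cos_comm_angle; rewrite /communicability ?expmx_star_leaf_diag
  ?expmx_star_leaf ?p_neq_q ?addr0 -?expr2.
- rewrite sqrtr_sqr ger0_norm ?ltW //.
  by field; rewrite gt_eqF // nat1r pnatr_eq0.
- by [].
- by rewrite exprn_gt0.
- by rewrite lerXn2r // ?nnegrE ?ltW.
Qed.

End StarGraph.

Theorem proposition4p3 (R : realType) (n : nat) (hn : (2 <= n)%N) :
  (forall p q : 'I_n, val p = 0%N -> val q <> 0%N ->
     cos (comm_angle (@star_adj R n) p q) ^+ 2 =
       tanh (Num.sqrt (n.-1)%:R) ^+ 2 /
         ((n - 2)%:R * sech (Num.sqrt (n.-1)%:R) + 1)) /\
  (forall p q : 'I_n, val p <> 0%N -> val q <> 0%N -> p <> q ->
     cos (comm_angle (@star_adj R n) p q) =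
       (cosh (Num.sqrt (n.-1)%:R) - 1) /
         (cosh (Num.sqrt (n.-1)%:R) + (n - 2)%:R)).
Proof.
case: n hn => [|[|n]] // _; rewrite [(n.+2).-1]/= !subSS subn0.
set x : R := Num.sqrt n.+1%:R.
have x_gt0 : 0 < x by rewrite sqrtr_gt0 ltr0n.
have sqr_x : x ^+ 2 = n.+1%:R by rewrite sqr_sqrtr ?ler0n.
split=> [p q p0 q_neq0 | p q p_neq0 q_neq0 p_neq_q].
  rewrite (_ : p = ord0); last exact: val_inj.
  case: (unliftP ord0 q) => [q' ->|q0]; last by rewrite q0 in q_neq0.
  exact: cos2_comm_angle_star_centre.
case: (unliftP ord0 p) => [p' p_lift|p0]; last by rewrite p0 in p_neq0.
case: (unliftP ord0 q) => [q' q_lift|q0]; last by rewrite q0 in q_neq0.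
rewrite p_lift q_lift (cos_comm_angle_star_leaves x_gt0 sqr_x) //.
by apply/eqP => p'_eq_q'; apply: p_neq_q; rewrite p_lift q_lift p'_eq_q'.
Qed.
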